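(* Let $f(a,b,c,d,e,x,y)$ be analytic in a neighbourhood of the origin of $\mathbb{C}^7$. Suppose that, with $F(X,Y)=f(a,b,c,d,e,X,Y)$, $f$ satisfies in a neighbourhood of the origin the equation $$x\Big\{F(xq,y)-F(xq,yq)-(d+e)q^{-1}\big[F(xq,yq)-F(xq,yq^2)\big]+de\,q^{-2}\big[F(xq,yq^2)-F(xq,yq^3)\big]\Big\}$$ $$=y\Big\{\big[F(xq,yq)-F(x,yq)\big]-(a+b+c)\big[F(xq,yq^2)-F(x,yq^2)\big]+(ab+ac+bc)\big[F(xq,yq^3)-F(x,yq^3)\big]-abc\big[F(xq,yq^4)-F(x,yq^4)\big]\Big\}.$$ Then $$f(a,b,c,d,e,x,y)=\mathbb{E}(a,b,c,d,e,y\theta_x)\{f(a,b,c,d,e,x,0)\}.$$ Precisely: writing $f=\sum_{k\ge0}A_k(x)y^k$ (with $a,b,c,d,e$ fixed), one has for each $k\ge0$, as power series in $x$, $$A_k(x)=\frac{(-1)^kq^{\binom k2}(a,b,c;q)_k}{(q,d,e;q)_k}\,\theta_x^k\{f(a,b,c,d,e,x,0)\}.$$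
   Context: Throughout, $0<q<1$. $(\alpha;q)_0=1$, $(\alpha;q)_n=\prod_{j=0}^{n-1}(1-\alpha q^j)$, and $(\alpha_1,\dots,\alpha_r;q)_n=\prod_i(\alpha_i;q)_n$. $\theta_x$ is the $q$-difference operator $\theta_x\{g(x)\}=\frac{g(xq^{-1})-g(x)}{q^{-1}x}$. On power series it acts termwise by $\theta_x\{x^m\}=q^{1-m}(1-q^m)x^{m-1}$. The operator is $\mathbb{E}(a,b,c,d,e,y\theta_x)=\sum_{n\ge0}\frac{(-1)^nq^{\binom n2}(a,b,c;q)_n}{(q,d,e;q)_n}(y\theta_x)^n$. *)

(* Complex numbers: R[i] (mathcomp-real-closed)
   over an arbitrary realType R, equipped with its normed/topological structure
   through the regular-algebra alias (R[i])^o. *)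
From HB Require Import structures.
From mathcomp Require Import all_boot all_order all_algebra.
From mathcomp Require Import all_classical all_reals all_analysis.
From mathcomp Require Import complex.
Set Implicit Arguments. Unset Strict Implicit. Unset Printing Implicit Defensive.
Import Order.TTheory GRing.Theory Num.Theory.
Import numFieldNormedType.Exports.
Local Open Scope classical_set_scope.
Local Open Scope ring_scope.

Section Defs.
Variable R : realType.
Local Notation C := ((R[i])^o).

Definition mono (N : nat) (z : 'I_N -> C) (al : {ffun 'I_N -> nat}) : C :=
  \prod_(i < N) z i ^+ al i.

Definition hom (N : nat) (c : {ffun 'I_N -> nat} -> C) (z : 'I_N -> C) (n : nat) : C :=
  \sum_(be : {ffun 'I_N -> 'I_n.+1} | (\sum_(i < N) (be i : nat) == n)%N)
     c [ffun i => (be i : nat)] * mono z [ffun i => (be i : nat)].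

(* same with absolute values (for absolute convergence) *)
Definition abshom (N : nat) (c : {ffun 'I_N -> nat} -> C) (z : 'I_N -> C) (n : nat) : C :=
  \sum_(be : {ffun 'I_N -> 'I_n.+1} | (\sum_(i < N) (be i : nat) == n)%N)
     `|c [ffun i => (be i : nat)]| * \prod_(i < N) `|z i| ^+ (be i : nat).

Definition power_series_on (N : nat) (c : {ffun 'I_N -> nat} -> C) (r : R)
    (F : ('I_N -> C) -> C) : Prop :=
  forall z : 'I_N -> C, (forall i, `|z i| < (r%:C)%C) ->
    cvgn (series (abshom c z)) /\ series (hom c z) @ \oo --> F z.

Definition analytic_at0 (N : nat) (F : ('I_N -> C) -> C) : Prop :=
  exists r : R, 0 < r /\ exists c, power_series_on c r F.

Definition uncurry7 (f : C -> C -> C -> C -> C -> C -> C -> C) : ('I_7 -> C) -> C :=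
  fun z => f (z (inord 0)) (z (inord 1)) (z (inord 2)) (z (inord 3))
             (z (inord 4)) (z (inord 5)) (z (inord 6)).

Definition uncurry2 (F : C -> C -> C) : ('I_2 -> C) -> C :=
  fun z => F (z (inord 0)) (z (inord 1)).

(* multi-index (m, k) : exponent m of x, exponent k of y *)
Definition idx2 (m k : nat) : {ffun 'I_2 -> nat} :=
  [ffun i : 'I_2 => if (i : nat) == 0%N then m else k].

Variable q : R.

Definition qpoch (al : C) (n : nat) : C := \prod_(j < n) (1 - al * ((q%:C)%C : C) ^+ j).

(* theta_x acting termwise on a power series sum_n s n x^n (given by its
   coefficient sequence): theta_x {x^n} = q^(1-n) (1-q^n) x^(n-1); the result
   is returned as its coefficient sequence. *)
Definition theta_coef (s : nat -> C) : nat -> C :=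
  fun m => (((q%:C)%C : C) ^+ m)^-1 * (1 - ((q%:C)%C : C) ^+ m.+1) * s m.+1.

(* k-th coefficient of the operator E(a,b,c,d,e, y theta_x) *)
Definition Ecoef (a b c d e : C) (k : nat) : C :=
  (-1) ^+ k * ((q%:C)%C : C) ^+ 'C(k, 2) * (qpoch a k * qpoch b k * qpoch c k)
  / (qpoch ((q%:C)%C : C) k * qpoch d k * qpoch e k).

Definition qeq (f : C -> C -> C -> C -> C -> C -> C -> C) (a b c d e x y : C) : Prop :=
  let F := f a b c d e in
  let Q := ((q%:C)%C : C) in
  x * (F (x * Q) y - F (x * Q) (y * Q)
       - (d + e) * Q^-1 * (F (x * Q) (y * Q) - F (x * Q) (y * Q ^+ 2))
       + d * e * Q ^- 2 * (F (x * Q) (y * Q ^+ 2) - F (x * Q) (y * Q ^+ 3)))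
  =
  y * ((F (x * Q) (y * Q) - F x (y * Q))
       - (a + b + c) * (F (x * Q) (y * Q ^+ 2) - F x (y * Q ^+ 2))
       + (a * b + a * c + b * c) * (F (x * Q) (y * Q ^+ 3) - F x (y * Q ^+ 3))
       - a * b * c * (F (x * Q) (y * Q ^+ 4) - F x (y * Q ^+ 4))).

End Defs.

From Pilot Require Import Defs.
From HB Require Import structures.
From mathcomp Require Import all_boot all_order all_algebra.
From mathcomp Require Import all_classical all_reals all_analysis.
From mathcomp Require Import complex.
From mathcomp Require Import lra ring.
Set Implicit Arguments. Unset Strict Implicit. Unset Printing Implicit Defensive.
Import Order.TTheory GRing.Theory Num.Theory.
Import numFieldNormedType.Exports.
Local Open Scope classical_set_scope.
Local Open Scope ring_scope.

(* Fix a, b, c, d, e and expand F(x,y) = f(a,b,c,d,e,x,y) = sum A(m,k) x^m y^k.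
   The operations occurring in the q-difference equation -- dilations
   (x,y) |-> (x u, y v) with |u|, |v| <= 1, linear combinations and
   multiplication by x or by y -- act explicitly on coefficient arrays.  Hence
   the difference of the two sides of the equation is represented by an
   explicit array; as it represents the zero function, the identity theorem
   for double power series makes that array vanish.  Its (m+1, k+1) entry is
   the recurrence
     A(m,k+1) q^m (1-q^(k+1))(1-dq^k)(1-eq^k)
        = A(m+1,k) (q^(m+1)-1) q^k (1-aq^k)(1-bq^k)(1-cq^k),
   whose unique solution is A(m,k) = Ecoef_k * (theta_x^k A(.,0))_m. *)

Section VanishingSeries.
Variable R : realType.
Local Notation C := ((R[i])^o).

Lemma ge0_Re (z : C) : 0 <= z -> z = (complex.Re z)%:C%C.
Proof. by move=> /ger0_Im; case: z => u v /= ->. Qed.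

Lemma normC_Re (z : C) : `|z| = (complex.Re `|z|)%:C%C.
Proof. exact/ge0_Re/normr_ge0. Qed.

Lemma normC_real (t : R) : 0 <= t -> `|(t%:C)%C : C| = (t%:C)%C.
Proof. by move=> t_ge0; apply: ger0_norm; rewrite ler0c. Qed.

Lemma normC_shrink (z w : C) (rho : R) : `|w| <= 1 -> `|z| < (rho%:C)%C -> `|z * w| < (rho%:C)%C.
Proof. by move=> w_le1 z_lt; rewrite normrM; apply: le_lt_trans z_lt; rewrite ler_piMr. Qed.

Lemma normC_half_le1 (t : R) : 0 < t -> t <= 2^-1 -> `|((t%:C)%C : C)| <= 1.
Proof.
move=> t_gt0 t_small; rewrite (normC_real (ltW t_gt0)) (_ : 1 = (1%:C)%C) // lecR.
by apply: le_trans t_small _; rewrite invf_le1 // ler1n.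
Qed.

Lemma le_linear_bound (u b : R) : 0 <= u -> 0 <= b ->
  (forall t : R, 0 < t -> t <= 2^-1 -> u <= 2 * b * t) -> u = 0.
Proof.
move=> u_ge0 b_ge0 small; apply/le_anti; rewrite u_ge0 andbT leNgt.
apply/negP => u_gt0.
have den_gt0 : 0 < 2 * u + 4 * b by nra.
pose t := u / (2 * u + 4 * b).
have t_gt0 : 0 < t by rewrite divr_gt0.
have tE : t * (2 * u + 4 * b) = u by rewrite divfK // gt_eqF.
have t_le : t <= 2^-1 by rewrite -(ler_pM2r den_gt0) tE; nra.
have := small t t_gt0 t_le; nra.
Qed.

Section LeadingCoefficient.
Variables (a : nat -> C) (b t : R) (n : nat).
Hypothesis a_bound : forall j, `|a j| <= (b%:C)%C.
Hypothesis a_lower : forall j, (j < n)%N -> a j = 0.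
Hypotheses (t_gt0 : 0 < t) (t_small : t <= 2^-1).
Local Notation tC := ((t%:C)%C : C).
Let S := series (fun j => a j * tC ^+ j).

Let b_ge0 : 0 <= b.
Proof. by rewrite -ler0c; apply: le_trans (a_bound 0). Qed.

(* Past the leading term, the partial sums differ from [a n * t ^ n] by at
   most a geometric tail [2 b t^(n+1)]; the sharper invariant is inductive. *)
Lemma partial_sum_tail N : (n < N)%N ->
  `|S N - a n * tC ^+ n| <= ((2 * b * t ^+ n.+1 - 2 * b * t ^+ N)%:C)%C.
Proof.
elim: N => // N IHN; rewrite ltnS leq_eqVlt => /orP [/eqP <- | n_lt_N].
  rewrite /S /series /= big_nat_recr //= big_nat_cond big1 ?add0r ?subrr ?normr0 //.
  by move=> j /andP [/andP [_ j_lt_n] _]; rewrite a_lower // mul0r.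
rewrite /S /series /= big_nat_recr //= addrAC.
have term_le : `|a N * tC ^+ N| <= ((b * t ^+ N)%:C)%C.
  rewrite normrM normrX (normC_real (ltW t_gt0)) -rmorphXn rmorphM /=.
  by apply: ler_wpM2r; rewrite ?ler0c ?exprn_ge0 // ltW.
apply: le_trans (ler_normD _ _) _; apply: le_trans (lerD (IHN n_lt_N) term_le) _.
rewrite -rmorphD lecR [t ^+ N.+1]exprS.
have := mulr_ge0 (mulr_ge0 b_ge0 (exprn_ge0 N (ltW t_gt0))) (_ : 0 <= 2^-1 - t).
by rewrite subr_ge0 => /(_ t_small); nra.
Qed.

Lemma leading_coef_bound : S @ \oo --> (0 : C) -> `|a n| <= ((2 * b * t)%:C)%C.
Proof.
move=> S0.
have tn_gt0 : (0 : C) < ((t ^+ n)%:C)%C by rewrite ltcR exprn_gt0.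
have lhsE : `|a n| * ((t ^+ n)%:C)%C = `|a n * tC ^+ n|.
  by rewrite normrM normrX (normC_real (ltW t_gt0)) rmorphXn.
have rhsE : ((2 * b * t)%:C)%C * ((t ^+ n)%:C)%C = ((2 * b * t ^+ n.+1)%:C)%C :> C.
  by rewrite -rmorphM /= exprS !mulrA.
rewrite -(ler_pM2r tn_gt0) lhsE rhsE; apply/ler_addgt0Pr => eps eps_gt0.
have [N0 _ SN0] := cvgr0_norm_lt _ S0 _ eps_gt0.
pose N := maxn N0 n.+1.
have SN_small : `|S N| < eps by apply: SN0; rewrite /= leq_maxl.
have tail := partial_sum_tail (leq_maxr N0 n.+1 : (n < N)%N).
have -> : a n * tC ^+ n = S N - (S N - a n * tC ^+ n) by rewrite subKr.
apply: le_trans (ler_normB _ _) _; rewrite [leRHS]addrC; apply: lerD (ltW SN_small) _.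
apply: le_trans tail _; rewrite lecR gerBl.
by rewrite !mulr_ge0 // exprn_ge0 // ltW.
Qed.

End LeadingCoefficient.

Lemma series_coef_eq0 (a : nat -> C) (b : R) :
  (forall j, `|a j| <= (b%:C)%C) ->
  (forall t : R, 0 < t -> t <= 2^-1 ->
     series (fun j => a j * ((t%:C)%C : C) ^+ j) @ \oo --> (0 : C)) ->
  forall n, a n = 0.
Proof.
move=> a_bound a_series n; elim/ltn_ind: n => n a_lower.
have b_ge0 : 0 <= b by rewrite -ler0c; apply: le_trans (a_bound 0).
have Re_eq0 : complex.Re `|a n| = 0.
  apply: (le_linear_bound _ b_ge0); first by rewrite -ler0c -normC_Re.
  move=> t t_gt0 t_small; rewrite -lecR -normC_Re.
  exact: leading_coef_bound a_lower t_gt0 t_small (a_series t t_gt0 t_small).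
by apply/normr0_eq0; rewrite normC_Re Re_eq0.
Qed.

End VanishingSeries.

Section DoubleSeries.
Variable R : realType.
Local Notation C := ((R[i])^o).
Implicit Types (c : nat -> nat -> C) (rho : R) (G : C -> C -> C).

Definition dhom c (x y : C) (n : nat) : C :=
  \sum_(i < n.+1) c i (n - i)%N * (x ^+ i * y ^+ (n - i)%N).

Definition represents c rho G :=
  forall x y : C, `|x| < (rho%:C)%C -> `|y| < (rho%:C)%C ->
    series (dhom c x y) @ \oo --> G x y.

Lemma dhom_scale c x y (t : C) n : dhom c (x * t) (y * t) n = dhom c x y n * t ^+ n.
Proof.
rewrite /dhom mulr_suml; apply: eq_bigr => i _.
have i_le : (i + (n - i) = n)%N by rewrite subnKC // -ltnS.
by rewrite !exprMn -[in t ^+ n]i_le exprD; ring.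
Qed.

(* A double series representing 0 has vanishing homogeneous parts: along the
   line t |-> (t x, t y) they are the coefficients of a vanishing series. *)
Lemma represents0_dhom c rho : represents c rho (fun _ _ => 0) ->
  forall x y : C, `|x| < (rho%:C)%C -> `|y| < (rho%:C)%C -> forall n, dhom c x y n = 0.
Proof.
move=> rep0 x y x_lt y_lt.
have [M [M_real M_bound]] :=
  cvg_seq_bounded (cvgP _ (cvg_series_cvg_0 (cvgP _ (rep0 x y x_lt y_lt)))).
apply: (@series_coef_eq0 _ _ (complex.Re M + 1)) => [j|t t_gt0 t_small].
  have M_lt : M < ((complex.Re M + 1)%:C)%C.
    by rewrite -{1}(RRe_real M_real) ltcR ltrDl.
  exact: M_bound M_lt j I.
have t_le1 := normC_half_le1 t_gt0 t_small.
rewrite (_ : (fun j => _) = dhom c (x * (t%:C)%C) (y * (t%:C)%C)).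
  by apply: rep0; apply: normC_shrink.
by apply/funext => j; rewrite dhom_scale.
Qed.

End DoubleSeries.

Section DoubleSeriesIdentity.
Variable R : realType.
Local Notation C := ((R[i])^o).

(* Identity theorem for double series: the homogeneous part of degree [n]
   at (t p, p) is a polynomial in [t] vanishing for small [t > 0], so each
   of its coefficients [c i (n - i) p^n] vanishes. *)
Lemma represents0_coef (c : nat -> nat -> C) (rho : R) : 0 < rho ->
  represents c rho (fun _ _ => 0) -> forall i j, c i j = 0.
Proof.
move=> rho_gt0 rep0 i j.
pose n := (i + j)%N; pose p : C := ((rho / 2)%:C)%C.
have half_gt0 : 0 < rho / 2 by rewrite divr_gt0.
have p_lt : `|p| < (rho%:C)%C.
  by rewrite normC_real ?ltW // ltcR ltr_pdivrMr // ltr_pMr // ltr1n.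
pose a k := if (k < n.+1)%N then c k (n - k)%N * p ^+ n else 0.
have p_neq0 : p != 0 by rewrite -normr_gt0 normC_real ?ltW // (_ : 0 = (0%:C)%C) // ltcR.
suff : a i = 0.
  rewrite /a ltnS leq_addr addKn => /eqP.
  by rewrite mulf_eq0 expf_eq0 (negbTE p_neq0) andbF orbF => /eqP.
pose b := complex.Re (\sum_(k < n.+1) `|a k|).
have sum_ge0 : 0 <= \sum_(k < n.+1) `|a k| by apply: sumr_ge0 => k _.
apply: (@series_coef_eq0 _ a b) => [k|t t_gt0 t_small].
  rewrite -ge0_Re //; case: (ltnP k n.+1) => [k_lt|k_ge].
    by rewrite (bigD1 (Ordinal k_lt)) //= lerDl sumr_ge0.
  by rewrite /a ltnNge k_ge /= normr0.
apply: cvg_near_cst; exists n.+1 => // N /= N_gt.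
rewrite /series /= (@big_cat_nat _ _ _ n.+1 0 N _ _ (leq0n n.+1) N_gt) /=.
rewrite [X in _ + X]big1_seq ?addr0; last first.
  by move=> k /andP [_]; rewrite mem_index_iota => /andP [k_ge _]; rewrite /a ltnNge k_ge mul0r.
have pt_lt : `|p * (t%:C)%C| < (rho%:C)%C by apply: normC_shrink (normC_half_le1 _ _) p_lt.
apply: etrans (represents0_dhom rep0 pt_lt p_lt n).
rewrite /dhom big_mkord; apply: eq_bigr => k _.
have k_le : (k + (n - k) = n)%N by rewrite subnKC // -ltnS.
by rewrite /a ltn_ord -[in p ^+ n]k_le exprD exprMn; ring.
Qed.

End DoubleSeriesIdentity.

Section RepresentsAlgebra.
Variable R : realType.
Local Notation C := ((R[i])^o).
Implicit Types (c : nat -> nat -> C) (rho : R) (G : C -> C -> C).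

Lemma represents_ext c rho G1 G2 : represents c rho G1 ->
  (forall x y : C, `|x| < (rho%:C)%C -> `|y| < (rho%:C)%C -> G1 x y = G2 x y) ->
  represents c rho G2.
Proof. by move=> rep E x y x_lt y_lt; rewrite -E //; apply: rep. Qed.

Lemma represents_le c rho rho' G : rho' <= rho -> represents c rho G -> represents c rho' G.
Proof.
move=> le_rho rep x y x_lt y_lt.
have le_rhoC : (rho'%:C)%C <= (rho%:C)%C :> C by rewrite lecR.
by apply: rep; apply: lt_le_trans le_rhoC.
Qed.

Lemma represents_add c1 c2 rho G1 G2 : represents c1 rho G1 -> represents c2 rho G2 ->
  represents (fun i j => c1 i j + c2 i j) rho (fun x y => G1 x y + G2 x y).
Proof.
move=> rep1 rep2 x y x_lt y_lt.
have -> : series (dhom (fun i j => c1 i j + c2 i j) x y) =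
          series (dhom c1 x y) \+ series (dhom c2 x y).
  apply/funext => N; rewrite /series /= -big_split /=; apply: eq_bigr => k _.
  by rewrite /dhom -big_split /=; apply: eq_bigr => i _; rewrite mulrDl.
exact: cvgD (rep1 x y x_lt y_lt) (rep2 x y x_lt y_lt).
Qed.

Lemma represents_sub c1 c2 rho G1 G2 : represents c1 rho G1 -> represents c2 rho G2 ->
  represents (fun i j => c1 i j - c2 i j) rho (fun x y => G1 x y - G2 x y).
Proof.
move=> rep1 rep2 x y x_lt y_lt.
have -> : series (dhom (fun i j => c1 i j - c2 i j) x y) =
          series (dhom c1 x y) \- series (dhom c2 x y).
  apply/funext => N; rewrite /series /= -sumrB /=; apply: eq_bigr => k _.
  by rewrite /dhom -sumrB /=; apply: eq_bigr => i _; rewrite mulrBl.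
exact: cvgB (rep1 x y x_lt y_lt) (rep2 x y x_lt y_lt).
Qed.

Lemma represents_scal (k : C) c rho G : represents c rho G ->
  represents (fun i j => k * c i j) rho (fun x y => k * G x y).
Proof.
move=> rep x y x_lt y_lt.
have -> : series (dhom (fun i j => k * c i j) x y) = (fun N => k * series (dhom c x y) N).
  apply/funext => N; rewrite /series /= mulr_sumr; apply: eq_bigr => n _.
  by rewrite /dhom mulr_sumr; apply: eq_bigr => i _; rewrite !mulrA.
exact: cvgMl_tmp _ (rep x y x_lt y_lt).
Qed.

Lemma represents_dilate (al be : C) c rho G : `|al| <= 1 -> `|be| <= 1 ->
  represents c rho G ->
  represents (fun i j => c i j * al ^+ i * be ^+ j) rho (fun x y => G (x * al) (y * be)).
Proof.
move=> al_le1 be_le1 rep x y x_lt y_lt.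
have -> : dhom (fun i j => c i j * al ^+ i * be ^+ j) x y = dhom c (x * al) (y * be).
  by apply/funext => n; rewrite /dhom; apply: eq_bigr => i _; rewrite !exprMn; ring.
by apply: rep; apply: normC_shrink.
Qed.

Lemma represents_mulx c rho G : represents c rho G ->
  represents (fun i j => if i is i'.+1 then c i' j else 0) rho (fun x y => x * G x y).
Proof.
move=> rep x y x_lt y_lt; rewrite -cvg_shiftS.
have -> : [sequence series (dhom (fun i j => if i is i'.+1 then c i' j else 0) x y) n.+1]_n
   = (fun N => x * series (dhom c x y) N).
  apply/funext => N; rewrite /series /= big_nat_recl //= mulr_sumr.
  rewrite /dhom big_ord1 /= mul0r add0r; apply: eq_bigr => n _.
  rewrite big_ord_recl /= mul0r add0r mulr_sumr; apply: eq_bigr => i _.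
  by rewrite /bump /= add1n subSS exprS; ring.
exact: cvgMl_tmp _ (rep x y x_lt y_lt).
Qed.

Lemma represents_muly c rho G : represents c rho G ->
  represents (fun i j => if j is j'.+1 then c i j' else 0) rho (fun x y => y * G x y).
Proof.
move=> rep x y x_lt y_lt; rewrite -cvg_shiftS.
have -> : [sequence series (dhom (fun i j => if j is j'.+1 then c i j' else 0) x y) n.+1]_n
   = (fun N => y * series (dhom c x y) N).
  apply/funext => N; rewrite /series /= big_nat_recl //= mulr_sumr.
  rewrite /dhom big_ord1 /= mul0r add0r; apply: eq_bigr => n _.
  rewrite big_ord_recr /= subnn mul0r addr0 mulr_sumr; apply: eq_bigr => i _.
  have i_le : (i <= n)%N by rewrite -ltnS.
  by rewrite /= subSn // exprS; ring.
exact: cvgMl_tmp _ (rep x y x_lt y_lt).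
Qed.

End RepresentsAlgebra.

Section PowerSeriesOn.
Variable R : realType.
Local Notation C := ((R[i])^o).

Definition point2 (x y : C) : 'I_2 -> C := fun k => if (k : nat) == 0%N then x else y.

Lemma sum_ord2 (g : 'I_2 -> nat) : (\sum_(i < 2) g i = g ord0 + g (lift ord0 ord0))%N.
Proof. by rewrite big_ord_recl big_ord1. Qed.

Lemma hom_dhom (A : {ffun 'I_2 -> nat} -> C) x y n :
  Defs.hom A (point2 x y) n = dhom (fun i j => A (idx2 i j)) x y n.
Proof.
pose h (i : 'I_n.+1) : {ffun 'I_2 -> 'I_n.+1} :=
  [ffun k : 'I_2 => if (k : nat) == 0%N then i else inord (n - i)].
pose h' (be : {ffun 'I_2 -> 'I_n.+1}) : 'I_n.+1 := be ord0.
rewrite /Defs.hom (reindex_onto h h') /=; last first.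
  move=> be; rewrite sum_ord2 => /eqP be_sum; apply/ffunP => k; rewrite ffunE /h'.
  case: k => [[|[|k]] k_lt] //=.
    by congr (be _); apply: val_inj.
  apply: val_inj; rewrite /= inordK; last by rewrite ltnS leq_subr.
  have -> : be (Ordinal k_lt) = be (lift ord0 ord0) by congr (be _); apply: val_inj.
  by rewrite -[X in (X - _)%N]be_sum addKn.
rewrite /dhom; apply: eq_big => i.
  rewrite /h' /h ffunE /= eqxx andbT sum_ord2 !ffunE /= inordK; last by rewrite ltnS leq_subr.
  by rewrite subnKC ?eqxx //; exact: ltn_ord i.
move=> _.
have -> : [ffun k : 'I_2 => nat_of_ord (h i k)] = idx2 i (n - i)%N.
  apply/ffunP => k; rewrite !ffunE /h ?ffunE.
  by case: k => [[|[|k]] k_lt] //=; rewrite inordK // ltnS leq_subr.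
by rewrite /mono big_ord_recl big_ord1 !ffunE.
Qed.

Lemma power_series_on_represents (A : {ffun 'I_2 -> nat} -> C) rho F :
  power_series_on A rho (uncurry2 F) -> represents (fun i j => A (idx2 i j)) rho F.
Proof.
move=> ps x y x_lt y_lt.
have pt_lt k : `|point2 x y k| < (rho%:C)%C by rewrite /point2; case: ifP.
have [_ ps_cvg] := ps (point2 x y) pt_lt.
rewrite (_ : dhom _ x y = Defs.hom A (point2 x y)); last by apply/funext => n; rewrite hom_dhom.
by move: ps_cvg; rewrite /uncurry2 /point2 !inordK.
Qed.

End PowerSeriesOn.

Section QDifferenceCoefficients.
Variables (R : realType) (q : R) (a b c d e : (R[i])^o).
Local Notation C := ((R[i])^o).
Local Notation Q := ((q%:C)%C : C).

(* The ratios of consecutive terms of the q-shifted factorials in [Ecoef]. *)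
Definition qnum (k : nat) : C := (1 - a * Q ^+ k) * (1 - b * Q ^+ k) * (1 - c * Q ^+ k).
Definition qden (k : nat) : C := (1 - Q * Q ^+ k) * (1 - d * Q ^+ k) * (1 - e * Q ^+ k).

Lemma Ecoef_succ k : Ecoef q a b c d e k.+1 = Ecoef q a b c d e k * (- Q ^+ k * qnum k / qden k).
Proof.
rewrite /Ecoef /qpoch !big_ord_recr /= binS bin1 exprD /qnum /qden !invfM exprS.
ring.
Qed.

(* Comparing coefficients of x^(m+1) y^(k+1) in the q-difference equation
   yields a first-order recurrence in [k] linking A(m, k+1) to A(m+1, k). *)
Lemma qeq_recurrence (f : C -> C -> C -> C -> C -> C -> C -> C) (A : nat -> nat -> C)
    (rho : R) : 0 < rho -> Q != 0 -> `|Q| <= 1 ->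
  represents A rho (f a b c d e) ->
  (forall x y, `|x| < (rho%:C)%C -> `|y| < (rho%:C)%C -> qeq q f a b c d e x y) ->
  forall m k, A m k.+1 * (Q ^+ m * qden k) = A m.+1 k * ((Q ^+ m * Q - 1) * Q ^+ k * qnum k).
Proof.
move=> rho_gt0 Q_neq0 Q_le1 rep feq.
have one_le1 : `|1 : C| <= 1 by rewrite normr1.
have dil (u : C) j : `|u| <= 1 -> represents (fun i l => A i l * u ^+ i * (Q ^+ j) ^+ l) rho
    (fun x y => f a b c d e (x * u) (y * Q ^+ j)).
  by move=> u_le1; apply: represents_dilate u_le1 _ rep; rewrite normrX exprn_ile1.
(* [lhs] and [rhs] represent the two brackets of the equation, term by term. *)
have lhs := represents_add
  (represents_sub (represents_sub (dil Q 0%N Q_le1) (dil Q 1%N Q_le1))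
     (represents_scal (k := (d + e) * Q^-1) (represents_sub (dil Q 1%N Q_le1) (dil Q 2%N Q_le1))))
  (represents_scal (k := d * e * Q ^- 2) (represents_sub (dil Q 2%N Q_le1) (dil Q 3%N Q_le1))).
have rhs := represents_sub (represents_add (represents_sub
   (represents_sub (dil Q 1%N Q_le1) (dil 1 1%N one_le1))
   (represents_scal (k := a + b + c) (represents_sub (dil Q 2%N Q_le1) (dil 1 2%N one_le1))))
   (represents_scal (k := a * b + a * c + b * c) (represents_sub (dil Q 3%N Q_le1) (dil 1 3%N one_le1))))
   (represents_scal (k := a * b * c) (represents_sub (dil Q 4%N Q_le1) (dil 1 4%N one_le1))).
have coef0 := represents0_coef rho_gt0
  (represents_ext (represents_sub (represents_mulx lhs) (represents_muly rhs)) (G2 := fun _ _ => 0) _).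
lapply coef0; last first.
  move=> x y x_lt y_lt /=.
  by have := feq x y x_lt y_lt; rewrite /qeq /= expr1 !mulr1 => ->; rewrite subrr.
move=> {}coef0 m k; have := coef0 m.+1 k.+1.
rewrite /= !expr1n expr1 !(exprAC Q _ k.+1) !(exprAC Q _ k) !exprSr expr0 /qnum /qden.
by move=> coef_eq; apply: subr0_eq; apply: etrans coef_eq; field.
Qed.

Lemma normQ_lt1 : 0 < q -> q < 1 -> `|Q| < 1.
Proof. by move=> q_gt0 q_lt1; rewrite (normC_real (ltW q_gt0)) (_ : 1 = (1%:C)%C) // ltcR. Qed.

Lemma qden_neq0 : 0 < q -> q < 1 -> `|d| < 1 -> `|e| < 1 -> forall k, qden k != 0.
Proof.
move=> q_gt0 q_lt1 d_lt1 e_lt1 k.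
have Q_lt1 := normQ_lt1 q_gt0 q_lt1.
have Qk_le1 : `|Q ^+ k| <= 1 by rewrite normrX exprn_ile1 // ltW.
have one_sub_neq0 (w : C) : `|w| < 1 -> 1 - w != 0.
  by move=> w_lt1; rewrite subr_eq0; apply: contraTneq w_lt1 => <-; rewrite normr1 ltxx.
have small (z : C) : `|z| < 1 -> 1 - z * Q ^+ k != 0.
  by move=> z_lt1; apply: one_sub_neq0; rewrite normrM; apply: le_lt_trans z_lt1; rewrite ler_piMr.
by rewrite /qden !mulf_neq0 ?small.
Qed.

Lemma recurrence_solution (A : nat -> nat -> C) : Q != 0 -> (forall k, qden k != 0) ->
  (forall m k, A m k.+1 * (Q ^+ m * qden k) = A m.+1 k * ((Q ^+ m * Q - 1) * Q ^+ k * qnum k)) ->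
  forall k m, A m k = Ecoef q a b c d e k * iter k (theta_coef q) (fun n => A n 0) m.
Proof.
move=> Q_neq0 qden_nz rec; elim=> [|k IHk] m.
  by rewrite /Ecoef /qpoch !big_ord0 bin0n /= !expr0 !mulr1 invr1 !mul1r.
have Qm_neq0 : Q ^+ m != 0 by rewrite expf_neq0.
apply: (mulIf (mulf_neq0 Qm_neq0 (qden_nz k))).
rewrite rec (IHk m.+1) iterS Ecoef_succ /theta_coef exprSr.
by field; rewrite qden_nz Qm_neq0.
Qed.

End QDifferenceCoefficients.

Lemma normC_lt_min (R : realType) (z : (R[i])^o) (r s : R) :
  `|z| < ((Order.min r s)%:C)%C -> `|z| < (r%:C)%C /\ `|z| < (s%:C)%C.
Proof. by move=> z_lt; split; apply: lt_le_trans z_lt _; rewrite lecR ge_min lexx ?orbT. Qed.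

Theorem theorem2 (R : realType) (q : R) (hq0 : 0 < q) (hq1 : q < 1)
  (f : (R[i])^o -> (R[i])^o -> (R[i])^o -> (R[i])^o -> (R[i])^o -> (R[i])^o ->
       (R[i])^o -> (R[i])^o) :
  analytic_at0 (uncurry7 f) ->
  (exists r : R, 0 < r /\
     forall a b c d e x y : (R[i])^o,
       `|a| < (r%:C)%C -> `|b| < (r%:C)%C -> `|c| < (r%:C)%C -> `|d| < (r%:C)%C ->
       `|e| < (r%:C)%C -> `|x| < (r%:C)%C -> `|y| < (r%:C)%C ->
       qeq q f a b c d e x y) ->
  exists r : R, 0 < r /\
    forall a b c d e : (R[i])^o,
      `|a| < (r%:C)%C -> `|b| < (r%:C)%C -> `|c| < (r%:C)%C -> `|d| < (r%:C)%C -> `|e| < (r%:C)%C ->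
      (* for every power series expansion f(a,b,c,d,e,x,y) = sum_{m,k} A m k x^m y^k
         near (x,y) = (0,0), i.e. A_k(x) = sum_m A m k x^m: *)
      forall (A : {ffun 'I_2 -> nat} -> (R[i])^o) (rho : R), 0 < rho ->
        power_series_on A rho (uncurry2 (f a b c d e)) ->
        forall k m : nat,
          A (idx2 m k) =
          Ecoef q a b c d e k * iter k (theta_coef q) (fun n => A (idx2 n 0)) m.
Proof.
move=> _ [r0 [r0_gt0 feq]].
exists (Order.min r0 1); split; first by rewrite lt_min r0_gt0 ltr01.
move=> a b c d e /normC_lt_min [a_lt _] /normC_lt_min [b_lt _] /normC_lt_min [c_lt _].
move=> /normC_lt_min [d_lt d_lt1] /normC_lt_min [e_lt e_lt1] A rho rho_gt0 ps.
have Q_lt1 := normQ_lt1 hq0 hq1.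
have Q_neq0 : (q%:C)%C != 0 :> (R[i])^o by rewrite -normr_gt0 (normC_real (ltW hq0)) ltcR.
have rep : represents (fun i j => A (idx2 i j)) (Order.min rho r0) (f a b c d e).
  by apply: represents_le (power_series_on_represents ps); rewrite ge_min lexx.
apply: (recurrence_solution Q_neq0 (qden_neq0 hq0 hq1 d_lt1 e_lt1)).
have rho'_gt0 : 0 < Order.min rho r0 by rewrite lt_min rho_gt0.
apply: (qeq_recurrence rho'_gt0 Q_neq0 (ltW Q_lt1) rep).
by move=> x y /normC_lt_min [_ x_lt] /normC_lt_min [_ y_lt]; apply: feq.
Qed.
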